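(* In the upper half-space model $\mathbb{H}^3=\{x_3>0\}$ with metric $\frac{1}{x_3^2}(dx_1^2+dx_2^2+dx_3^2)$, let $\gamma:[0,\infty)\to\mathbb{H}^3$, $\gamma(s)=(\gamma_1(s),0,\gamma_2(s))$, be a regular curve parametrized by hyperbolic arc length with $\gamma_1>0$, $\gamma_2>0$, and set $w_{-1}=\gamma_1/\gamma_2$ and $x_g(\gamma([0,s]))=\frac{1}{s}\int_0^s w_{-1}(t)\,dt$. Suppose there are $C>0$ and $s_0>0$ such that $x_g(\gamma([0,s]))\le C\,s$ for all $s\ge s_0$. Then the end of revolution $f(\theta,s)=R_\theta\gamma(s)$ is parabolic.
   Context: $R_\theta$ is the rotation of angle $\theta$ about the $x_3$-axis, $(x_1,x_2,x_3)\mapsto(x_1\cos\theta-x_2\sin\theta,x_1\sin\theta+x_2\cos\theta,x_3)$, which is an isometry of $\mathbb{H}^3$. The end carries the induced metric. An end is parabolic if every bounded harmonic function on it is determined by its boundary values. *)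

From Stdlib Require Import Reals Lra.
From Coquelicot Require Import Coquelicot.
Open Scope R_scope.

(* Profile curve gamma(s) = (g1 s, 0, g2 s) in the upper half-space model. *)

(* Smoothness on [0, oo): derivatives of all orders exist at every s >= 0
   (functions are given on R; a smooth curve on [0,oo) always extends). *)
Definition smooth_on_half_line (g : R -> R) : Prop :=
  forall (n : nat) (s : R), 0 <= s -> ex_derive_n g n s.

Definition hyp_unit_speed (g1 g2 : R -> R) : Prop :=
  forall s, 0 <= s ->
    ((Derive g1 s) ^ 2 + (Derive g2 s) ^ 2) / (g2 s) ^ 2 = 1.

Definition w_m1 (g1 g2 : R -> R) (t : R) : R := g1 t / g2 t.

Definition x_g (g1 g2 : R -> R) (s : R) : R :=
  / s * RInt (w_m1 g1 g2) 0 s.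

Definition fE1 (g1 g2 : R -> R) (th s : R) : R := g1 s * cos th.
Definition fE2 (g1 g2 : R -> R) (th s : R) : R := g1 s * sin th.
Definition fE3 (g1 g2 : R -> R) (th s : R) : R := g2 s.

Definition d_s (h : R -> R -> R) (th s : R) : R := Derive (fun t => h th t) s.
Definition d_th (h : R -> R -> R) (th s : R) : R := Derive (fun t => h t s) th.

Definition hyp_inner (x3 a1 a2 a3 b1 b2 b3 : R) : R :=
  (a1 * b1 + a2 * b2 + a3 * b3) / x3 ^ 2.

Definition met_E (g1 g2 : R -> R) (th s : R) : R :=
  hyp_inner (fE3 g1 g2 th s)
    (d_s (fE1 g1 g2) th s) (d_s (fE2 g1 g2) th s) (d_s (fE3 g1 g2) th s)
    (d_s (fE1 g1 g2) th s) (d_s (fE2 g1 g2) th s) (d_s (fE3 g1 g2) th s).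
Definition met_F (g1 g2 : R -> R) (th s : R) : R :=
  hyp_inner (fE3 g1 g2 th s)
    (d_s (fE1 g1 g2) th s) (d_s (fE2 g1 g2) th s) (d_s (fE3 g1 g2) th s)
    (d_th (fE1 g1 g2) th s) (d_th (fE2 g1 g2) th s) (d_th (fE3 g1 g2) th s).
Definition met_G (g1 g2 : R -> R) (th s : R) : R :=
  hyp_inner (fE3 g1 g2 th s)
    (d_th (fE1 g1 g2) th s) (d_th (fE2 g1 g2) th s) (d_th (fE3 g1 g2) th s)
    (d_th (fE1 g1 g2) th s) (d_th (fE2 g1 g2) th s) (d_th (fE3 g1 g2) th s).
Definition met_det (g1 g2 : R -> R) (th s : R) : R :=
  met_E g1 g2 th s * met_G g1 g2 th s - (met_F g1 g2 th s) ^ 2.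

(* Laplace-Beltrami operator of the induced metric, in divergence form:
   Delta u = 1/sqrt g * ( d_s (sqrt g (g^ss u_s + g^sth u_th))
                        + d_th (sqrt g (g^ths u_s + g^thth u_th)) ). *)
Definition laplace_beltrami (g1 g2 : R -> R) (u : R -> R -> R) (th s : R) : R :=
  let D := met_det g1 g2 in
  let flux_s := fun th' s' =>
    sqrt (D th' s') * (met_G g1 g2 th' s' * d_s u th' s'
                       - met_F g1 g2 th' s' * d_th u th' s') / D th' s' in
  let flux_th := fun th' s' =>
    sqrt (D th' s') * (met_E g1 g2 th' s' * d_th u th' s'
                       - met_F g1 g2 th' s' * d_s u th' s') / D th' s' in
  / sqrt (D th s) * (d_s flux_s th s + d_th flux_th th s).

Definition C2_at (u : R -> R -> R) (th s : R) : Prop :=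
  ex_derive (fun t => u th t) s /\ ex_derive (fun t => u t s) th /\
  ex_derive (fun t => d_s u th t) s /\ ex_derive (fun t => d_s u t s) th /\
  ex_derive (fun t => d_th u th t) s /\ ex_derive (fun t => d_th u t s) th /\
  continuity_2d_pt u th s /\
  continuity_2d_pt (d_s u) th s /\ continuity_2d_pt (d_th u) th s /\
  continuity_2d_pt (d_s (d_s u)) th s /\ continuity_2d_pt (d_th (d_s u)) th s /\
  continuity_2d_pt (d_s (d_th u)) th s /\ continuity_2d_pt (d_th (d_th u)) th s.

Definition continuous_on_end (u : R -> R -> R) : Prop :=
  forall th s, 0 <= s -> forall eps, 0 < eps -> exists delta, 0 < delta /\
    forall th' s', 0 <= s' -> Rabs (th' - th) < delta -> Rabs (s' - s) < delta ->
      Rabs (u th' s' - u th s) < eps.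

(* Bounded harmonic function on the end S^1 x [0,oo) (theta is 2pi-periodic),
   harmonic in the interior s > 0, continuous up to the boundary s = 0. *)
Definition bounded_harmonic_on_end (g1 g2 : R -> R) (u : R -> R -> R) : Prop :=
  (forall th s, u (th + 2 * PI) s = u th s) /\
  (exists M, forall th s, 0 <= s -> Rabs (u th s) <= M) /\
  continuous_on_end u /\
  (forall th s, 0 < s -> C2_at u th s /\ laplace_beltrami g1 g2 u th s = 0).

Definition parabolic_end (g1 g2 : R -> R) : Prop :=
  forall u v : R -> R -> R,
    bounded_harmonic_on_end g1 g2 u -> bounded_harmonic_on_end g1 g2 v ->
    (forall th, u th 0 = v th 0) ->
    forall th s, 0 <= s -> u th s = v th s.

From Stdlib Require Import Reals Lra Lia ZArith IndefiniteDescription.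
From Coquelicot Require Import Coquelicot.
Open Scope R_scope.

(* In the coordinates (th, s) the induced metric is ds^2 + w^2 dth^2 with w = g1 / g2, so
   harmonic functions solve (w h_s)_s + h_thth / w = 0.  Let h be the difference of two bounded
   harmonic functions with the same boundary values and E(s) = int_0^2pi h(th, s)^2 dth.  The
   flux w E' is nondecreasing, its derivative being twice the Dirichlet energy of the slice
   (the angular term integrates away by periodicity).  A positive flux c would give
   E(b) >= E(a) + c int_a^b dt / w, which is unbounded: the growth hypothesis says
   int_0^s w <= C s^2, so by AM-GM int_x^2x dt / w >= 1 / (4 C) on every dyadic block.  This
   contradicts the boundedness of h, so E is nonincreasing; since E tends to 0 at the boundary,
   E = 0 and h = 0. *)

Ltac continuous_R :=
  repeat match goal with
  | |- continuous (fun _ => ?c) _ => apply continuous_const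
  | |- continuous (fun t => @?f t + @?g t) _ => apply (continuous_plus f g)
  | |- continuous (fun t => @?f t - @?g t) _ => apply (continuous_minus f g)
  | |- continuous (fun t => @?f t * @?g t) _ => apply (continuous_mult f g)
  end.

Ltac continuity_2d_R :=
  repeat match goal with
  | |- continuity_2d_pt (fun _ _ => ?c) _ _ => apply continuity_2d_pt_const
  | |- continuity_2d_pt (fun u v => @?f u v + @?g u v) _ _ => apply (continuity_2d_pt_plus f g)
  | |- continuity_2d_pt (fun u v => @?f u v - @?g u v) _ _ => apply (continuity_2d_pt_minus f g)
  | |- continuity_2d_pt (fun u v => @?f u v * @?g u v) _ _ => apply (continuity_2d_pt_mult f g)
  end.

Lemma is_derive_Rmult (f g : R -> R) x df dg l :
  is_derive f x df -> is_derive g x dg -> l = df * g x + f x * dg ->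
  is_derive (fun y => f y * g y) x l.
Proof. intros Hf Hg ->. apply (is_derive_mult f g); [exact Hf | exact Hg | apply Rmult_comm]. Qed.

Lemma locally_pos (s : R) : 0 < s -> locally s (fun y => 0 < y).
Proof.
  intros Hs. exists (mkposreal (s / 2) ltac:(lra)).
  intros y Hy. change (Rabs (y - s) < s / 2) in Hy. apply Rabs_def2 in Hy. lra.
Qed.

Lemma continuous_fst_of_2d (f : R -> R -> R) x y :
  continuity_2d_pt f x y -> continuous (fun t => f t y) x.
Proof.
  intros H. apply filterlim_locally. intros eps.
  destruct (H eps) as [d Hd]. exists d. intros z Hz.
  apply Hd; [exact Hz | rewrite Rminus_eq_0, Rabs_R0; apply cond_pos].
Qed.

Lemma continuity_2d_pt_swap (f : R -> R -> R) x y :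
  continuity_2d_pt f x y -> continuity_2d_pt (fun a b => f b a) y x.
Proof.
  intros H eps. destruct (H eps) as [d Hd]. exists d. intros u v Hu Hv. now apply Hd.
Qed.

Lemma ex_RInt_continuous_R (f : R -> R) a b :
  (forall z, Rmin a b <= z <= Rmax a b -> continuous f z) -> ex_RInt f a b.
Proof. apply (@ex_RInt_continuous R_CompleteNormedModule). Qed.

Lemma RInt_lincomb (f g : R -> R) a b al be :
  ex_RInt f a b -> ex_RInt g a b ->
  RInt (fun t => al * f t + be * g t) a b = al * RInt f a b + be * RInt g a b.
Proof.
  intros Hf Hg.
  change (RInt (fun t => plus (scal al (f t)) (scal be (g t))) a b
          = plus (scal al (RInt f a b)) (scal be (RInt g a b))).
  rewrite <- (RInt_scal f a b al Hf), <- (RInt_scal g a b be Hg).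
  apply (RInt_plus (V := R_CompleteNormedModule));
    now apply (ex_RInt_scal (V := R_NormedModule)).
Qed.

Lemma Rle_of_is_derive_nonneg (f df : R -> R) a b : a <= b ->
  (forall x, a <= x <= b -> is_derive f x (df x)) ->
  (forall x, a <= x <= b -> 0 <= df x) -> f a <= f b.
Proof.
  intros Hab Hd Hp.
  destruct (MVT_gen f a b df) as [c [Hc E]];
    rewrite ?Rmin_left, ?Rmax_right in * by lra.
  - intros x Hx. apply Hd. lra.
  - intros x Hx. apply continuity_pt_filterlim.
    apply (ex_derive_continuous (K := R_AbsRing) (V := R_NormedModule)).
    eexists. apply Hd. exact Hx.
  - assert (0 <= df c * (b - a)) by (apply Rmult_le_pos; [apply Hp; lra | lra]). lra.
Qed.

Lemma RInt_gt_0_of_point (f : R -> R) a b x0 : a < b ->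
  (forall x, a <= x <= b -> continuous f x) ->
  (forall x, a <= x <= b -> 0 <= f x) ->
  a <= x0 <= b -> 0 < f x0 -> 0 < RInt f a b.
Proof.
  intros Hab Hc Hp Hx0 Hf0.
  pose proof (Hc x0 Hx0) as H. unfold continuous in H. rewrite filterlim_locally in H.
  destruct (H (mkposreal (f x0 / 2) ltac:(lra))) as [d Hd]. simpl in Hd.
  pose proof (cond_pos d) as dpos.
  set (c := Rmax a (x0 - d / 2)). set (e := Rmin b (x0 + d / 2)).
  assert (Hce : a <= c < e /\ e <= b /\ x0 - d / 2 <= c /\ e <= x0 + d / 2).
  { unfold c, e, Rmax, Rmin. repeat destruct Rle_dec; lra. }
  assert (Hex : forall u v, a <= u <= v -> v <= b -> ex_RInt f u v).
  { intros u v Huv Hv. apply ex_RInt_continuous_R. intros z Hz.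
    rewrite Rmin_left, Rmax_right in Hz by lra. apply Hc. lra. }
  rewrite <- (RInt_Chasles f a c b), <- (RInt_Chasles f c e b) by (apply Hex; lra).
  assert (0 <= RInt f a c) by (apply RInt_ge_0; [lra | apply Hex; lra | intros; apply Hp; lra]).
  assert (0 <= RInt f e b) by (apply RInt_ge_0; [lra | apply Hex; lra | intros; apply Hp; lra]).
  assert (0 < RInt f c e).
  { apply RInt_gt_0; [lra | | intros x Hx; apply Hc; lra].
    intros x Hx. assert (Hb : ball x0 d x) by (change (Rabs (x - x0) < d); apply Rabs_def1; lra).
    apply Hd, Rabs_def2 in Hb. unfold minus, plus, opp in Hb. simpl in Hb. lra. }
  change plus with Rplus. lra.
Qed.

Lemma is_derive_RInt_param_half_plane (F dF : R -> R -> R) a b s : 0 < s ->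
  (forall t u, 0 < u -> is_derive (fun z => F t z) u (dF t u)) ->
  (forall t u, 0 < u -> continuity_2d_pt F t u) ->
  (forall t u, 0 < u -> continuity_2d_pt dF t u) ->
  is_derive (fun z => RInt (fun t => F t z) a b) s (RInt (fun t => dF t s) a b).
Proof.
  intros Hs Hd HcF HcdF.
  replace (RInt (fun t => dF t s) a b) with (RInt (fun t => Derive (fun u => F t u) s) a b)
    by (apply RInt_ext; intros x _; apply is_derive_unique, Hd, Hs).
  apply (is_derive_RInt_param (fun z t => F t z)).
  - apply (filter_imp (fun y => 0 < y)); [| now apply locally_pos].
    intros y Hy t _. eexists. now apply Hd.
  - intros t _. apply continuity_2d_pt_ext_loc with (f := fun u v => dF v u).
    + exists (mkposreal (s / 2) ltac:(lra)). simpl. intros u v Hu _.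
      apply Rabs_def2 in Hu. symmetry. apply is_derive_unique, Hd. lra.
    + now apply continuity_2d_pt_swap, HcdF.
  - apply (filter_imp (fun y => 0 < y)); [| now apply locally_pos].
    intros y Hy. apply ex_RInt_continuous_R. intros z _.
    now apply continuous_fst_of_2d, HcF.
Qed.

Section Periodic.

Variables (F : R -> R) (T : R).
Hypothesis HF : forall x, F (x + T) = F x.

Lemma Derive_periodic : ex_derive F T -> Derive F T = Derive F 0.
Proof.
  intros Hd. symmetry. apply is_derive_unique.
  apply (is_derive_ext (fun x => F (x + T))); [exact HF |].
  assert (Hc := is_derive_comp F (fun x => x + T) 0 (Derive F T) 1).
  change (scal 1 (Derive F T)) with (1 * Derive F T) in Hc.
  cbv beta in Hc. rewrite Rplus_0_l, Rmult_1_l in Hc.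
  apply Hc; [now apply Derive_correct | auto_derive; trivial; ring].
Qed.

Lemma periodic_nat n x : F (x + INR n * T) = F x.
Proof.
  induction n as [| n IH]; [now rewrite Rmult_0_l, Rplus_0_r |].
  rewrite S_INR, <- IH, <- (HF (x + INR n * T)). f_equal. ring.
Qed.

Lemma periodic_IZR k x : F (x + IZR k * T) = F x.
Proof.
  destruct (Z_le_gt_dec 0 k) as [Hk | Hk].
  - rewrite <- (Z2Nat.id k Hk), <- INR_IZR_INZ. apply periodic_nat.
  - replace k with (- Z.of_nat (Z.to_nat (- k)))%Z by lia.
    rewrite opp_IZR, <- INR_IZR_INZ, <- (periodic_nat (Z.to_nat (- k))).
    f_equal. ring.
Qed.

Lemma periodic_reduce : 0 < T -> forall x, exists y, 0 <= y <= T /\ F x = F y.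
Proof.
  intros HT x. destruct (archimed (x / T)) as [H1 H2].
  exists (x + IZR (1 - up (x / T)) * T). split.
  - rewrite minus_IZR.
    assert (x / T * T = x) by (field; lra). split; nra.
  - symmetry. apply periodic_IZR.
Qed.

End Periodic.

Section InverseWeight.

Variables (w : R -> R) (C s0 : R).
Hypotheses (HC : 0 < C) (Hs0 : 0 < s0).
Hypothesis Hw : forall t, 0 <= t -> 0 < w t.
Hypothesis Hwc : forall t, 0 <= t -> continuous w t.
Hypothesis Hgrowth : forall s, s0 <= s -> RInt w 0 s <= C * s ^ 2.

Lemma ex_RInt_weight x y : 0 <= x -> 0 <= y -> ex_RInt w x y.
Proof.
  intros Hx Hy. apply ex_RInt_continuous_R. intros z Hz. apply Hwc.
  unfold Rmin in Hz. destruct Rle_dec in Hz; lra.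
Qed.

Lemma ex_RInt_inv_weight x y : 0 <= x -> 0 <= y -> ex_RInt (fun t => / w t) x y.
Proof.
  intros Hx Hy. apply ex_RInt_continuous_R. intros z Hz.
  assert (0 <= z) by (unfold Rmin in Hz; destruct Rle_dec in Hz; lra).
  apply continuous_Rinv_comp; [apply Hwc; lra | apply Rgt_not_eq, Hw; lra].
Qed.

Lemma RInt_inv_weight_doubling x : s0 <= x -> 1 / (4 * C) <= RInt (fun t => / w t) x (2 * x).
Proof.
  intros Hx. set (l := / (4 * C * x)).
  assert (Hl : 0 < l) by (apply Rinv_0_lt_compat; nra).
  (* AM-GM: [1 / w >= 2 l - l^2 w] pointwise, and [l] is chosen to optimise the bound *)
  assert (Hamgm : RInt (fun t => 2 * l * 1 + - (l * l) * w t) x (2 * x)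
                  <= RInt (fun t => / w t) x (2 * x)).
  { apply RInt_le; [lra | | apply ex_RInt_inv_weight; lra |].
    - apply ex_RInt_continuous_R. intros z Hz. continuous_R. apply Hwc.
      unfold Rmin in Hz. destruct Rle_dec in Hz; lra.
    - intros t Ht. assert (0 < w t) by (apply Hw; lra).
      assert (0 <= (1 - l * w t) ^ 2 / w t)
        by (apply Rmult_le_pos; [apply pow2_ge_0 | apply Rlt_le, Rinv_0_lt_compat; lra]).
      replace (/ w t) with ((1 - l * w t) ^ 2 / w t + (2 * l * 1 + - (l * l) * w t))
        by (field; lra).
      lra. }
  rewrite RInt_lincomb, RInt_const in Hamgm;
    [| apply ex_RInt_continuous_R; intros; apply continuous_const | apply ex_RInt_weight; lra].
  assert (Hsplit : RInt w 0 x + RInt w x (2 * x) = RInt w 0 (2 * x))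
    by (apply (RInt_Chasles (V := R_CompleteNormedModule)); apply ex_RInt_weight; lra).
  assert (0 <= RInt w 0 x)
    by (apply RInt_ge_0; [lra | apply ex_RInt_weight; lra | intros t Ht; apply Rlt_le, Hw; lra]).
  assert (RInt w 0 (2 * x) <= C * (2 * x) ^ 2) by (apply Hgrowth; lra).
  assert (l * l * RInt w x (2 * x) <= l * l * (4 * C * x ^ 2))
    by (apply Rmult_le_compat_l; nra).
  assert (l * l * (4 * C * x ^ 2) = 1 / (4 * C)) by (unfold l; field; lra).
  assert (2 * l * ((2 * x - x) * 1) = 1 / (2 * C)) by (unfold l; field; lra).
  assert (1 / (2 * C) = 2 * (1 / (4 * C))) by (field; lra).
  change (scal (2 * x - x) 1) with ((2 * x - x) * 1) in Hamgm.
  lra.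
Qed.

Lemma RInt_inv_weight_dyadic n a :
  s0 <= a -> INR n / (4 * C) <= RInt (fun t => / w t) a (a * 2 ^ n).
Proof.
  revert a. induction n as [| n IH]; intros a Ha.
  - rewrite pow_O, Rmult_1_r, RInt_point. change (zero : R) with 0. change (INR 0) with 0.
    unfold Rdiv. lra.
  - assert (1 <= 2 ^ n) by (apply pow_R1_Rle; lra).
    assert (Han : s0 <= a * 2 ^ n) by nra.
    rewrite <- (RInt_Chasles _ a (a * 2 ^ n)) by (apply ex_RInt_inv_weight; simpl; nra).
    replace (a * 2 ^ S n) with (2 * (a * 2 ^ n)) by (simpl; ring).
    pose proof (RInt_inv_weight_doubling _ Han). pose proof (IH a Ha).
    rewrite S_INR. change plus with Rplus.
    replace ((INR n + 1) / (4 * C)) with (INR n / (4 * C) + 1 / (4 * C)) by (field; lra).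
    lra.
Qed.

Lemma RInt_inv_weight_unbounded a K :
  0 <= a -> exists b, a <= b /\ K < RInt (fun t => / w t) a b.
Proof.
  intros Ha. set (a' := Rmax a s0).
  assert (a <= a' /\ s0 <= a') by (split; [apply Rmax_l | apply Rmax_r]).
  destruct (INR_unbounded (K * (4 * C))) as [n Hn].
  assert (1 <= 2 ^ n) by (apply pow_R1_Rle; lra).
  exists (a' * 2 ^ n). split; [nra |].
  rewrite <- (RInt_Chasles _ a a') by (apply ex_RInt_inv_weight; nra).
  assert (0 <= RInt (fun t => / w t) a a').
  { apply RInt_ge_0; [lra | apply ex_RInt_inv_weight; lra |].
    intros t Ht. apply Rlt_le, Rinv_0_lt_compat, Hw. lra. }
  pose proof (RInt_inv_weight_dyadic n a' (proj2 H)).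
  assert (K < INR n / (4 * C)) by (apply Rmult_lt_reg_r with (4 * C); [lra |];
    unfold Rdiv; rewrite Rmult_assoc, Rinv_l, Rmult_1_r; lra).
  change plus with Rplus. lra.
Qed.

End InverseWeight.

Definition has_C2_partials (h hs hss hth htt : R -> R -> R) : Prop :=
  forall th s, 0 < s ->
    is_derive (fun t => h th t) s (hs th s) /\ is_derive (fun t => hs th t) s (hss th s) /\
    is_derive (fun t => h t s) th (hth th s) /\ is_derive (fun t => hth t s) th (htt th s) /\
    continuity_2d_pt h th s /\ continuity_2d_pt hs th s /\ continuity_2d_pt hss th s /\
    continuity_2d_pt hth th s /\ continuity_2d_pt htt th s.

Section Liouville.

Variables (w w' : R -> R) (h hs hss hth htt : R -> R -> R) (M : R).
Hypothesis Hw : forall t, 0 < t -> 0 < w t.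
Hypothesis Hwd : forall t, 0 < t -> is_derive w t (w' t).
Hypothesis Hdiv : forall a K, 0 < a -> exists b, a <= b /\ K < RInt (fun t => / w t) a b.
Hypothesis Hreg : has_C2_partials h hs hss hth htt.
Hypothesis Hpde :
  forall th s, 0 < s -> w s * hss th s + w' s * hs th s + htt th s / w s = 0.
Hypothesis Hper : forall s, 0 < s -> h (2 * PI) s = h 0 s /\ hth (2 * PI) s = hth 0 s.
Hypothesis Hbd : forall th s, 0 < s -> Rabs (h th s) <= M.
Hypothesis Hlim0 : forall eps, 0 < eps -> exists d, 0 < d /\
  forall th s, 0 <= th <= 2 * PI -> 0 < s < d -> Rabs (h th s) < eps.

Let P := 2 * PI.
Let energy s := RInt (fun t => h t s * h t s) 0 P.
Let energy' s := RInt (fun t => 2 * h t s * hs t s) 0 P.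
Let energy'' s := RInt (fun t => 2 * (hs t s * hs t s) + 2 * (h t s * hss t s)) 0 P.
Let flux s := w s * energy' s.

Local Ltac partial_2d :=
  match goal with Hs : 0 < ?s |- continuity_2d_pt _ ?th ?s =>
    destruct (Hreg th s Hs) as (_ & _ & _ & _ & ? & ? & ? & ? & ?); assumption end.

Local Ltac continuous_slice :=
  continuous_R; apply continuous_fst_of_2d; partial_2d.

Local Ltac ex_RInt_slice := apply ex_RInt_continuous_R; intros ? _; continuous_slice.

Let P_pos : 0 < P.
Proof. unfold P. pose proof PI_RGT_0. lra. Qed.

Let continuous_inv_w t : 0 < t -> continuous (fun x => / w x) t.
Proof.
  intros Ht. apply continuous_Rinv_comp; [| now apply Rgt_not_eq, Hw].
  apply (ex_derive_continuous (K := R_AbsRing) (V := R_NormedModule)). eexists. now apply Hwd.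
Qed.

Lemma is_derive_energy s : 0 < s -> is_derive energy s (energy' s).
Proof.
  intros Hs. unfold energy, energy'.
  apply (is_derive_RInt_param_half_plane (fun t z => h t z * h t z)
    (fun t z => 2 * h t z * hs t z)); [exact Hs | | |].
  - intros t u Hu. destruct (Hreg t u Hu) as (Hd & _).
    apply is_derive_Rmult with (hs t u) (hs t u); [exact Hd | exact Hd | ring].
  - intros t u Hu. continuity_2d_R; partial_2d.
  - intros t u Hu. continuity_2d_R; partial_2d.
Qed.

Lemma is_derive_energy' s : 0 < s -> is_derive energy' s (energy'' s).
Proof.
  intros Hs. unfold energy', energy''.
  apply (is_derive_RInt_param_half_plane (fun t z => 2 * h t z * hs t z)
    (fun t z => 2 * (hs t z * hs t z) + 2 * (h t z * hss t z))); [exact Hs | | |].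
  - intros t u Hu. destruct (Hreg t u Hu) as (Hd & Hd' & _).
    apply is_derive_Rmult with (2 * hs t u) (hss t u); [| exact Hd' | ring].
    now apply (is_derive_scal (fun z => h t z)).
  - intros t u Hu. continuity_2d_R; partial_2d.
  - intros t u Hu. continuity_2d_R; partial_2d.
Qed.

Lemma RInt_angular_by_parts s :
  0 < s -> RInt (fun t => hth t s * hth t s + h t s * htt t s) 0 P = 0.
Proof.
  intros Hs.
  rewrite (is_RInt_unique _ 0 P (minus (h P s * hth P s) (h 0 s * hth 0 s))).
  - destruct (Hper s Hs) as [E1 E2]. unfold P. rewrite E1, E2.
    apply (minus_eq_zero (G := R_AbelianGroup)).
  - apply (is_RInt_derive (fun t => h t s * hth t s)).
    + intros x _. destruct (Hreg x s Hs) as (_ & _ & Hd & Hd' & _).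
      apply is_derive_Rmult with (hth x s) (htt x s); [exact Hd | exact Hd' | ring].
    + intros x _. continuous_slice.
Qed.

Lemma flux_derive_nonneg s : 0 < s -> 0 <= w' s * energy' s + w s * energy'' s.
Proof.
  intros Hs. assert (Hws : 0 < w s) by auto.
  set (J := fun t => hth t s * hth t s + h t s * htt t s).
  set (A := fun t => 2 * w s * (hs t s * hs t s) + 2 / w s * (hth t s * hth t s)).
  assert (HA : 0 <= RInt A 0 P).
  { apply RInt_ge_0; [pose proof P_pos; lra | unfold A; ex_RInt_slice |].
    intros x _. unfold A.
    assert (0 <= 2 / w s) by (apply Rlt_le, Rdiv_lt_0_compat; lra).
    assert (0 <= hs x s * hs x s) by nra. assert (0 <= hth x s * hth x s) by nra. nra. }
  (* the equation turns [(w energy')'] into the Dirichlet energy of the slice, up to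
     an angular term that integrates to zero by periodicity *)
  replace (w' s * energy' s + w s * energy'' s)
    with (RInt (fun t => 1 * A t + - (2 / w s) * J t) 0 P).
  - rewrite RInt_lincomb; [| unfold A; ex_RInt_slice | unfold J; ex_RInt_slice].
    unfold J. rewrite RInt_angular_by_parts by exact Hs. lra.
  - unfold energy', energy''. rewrite <- RInt_lincomb by ex_RInt_slice.
    apply RInt_ext. intros x _. unfold A, J.
    assert (Htt : htt x s = - w s * (w s * hss x s + w' s * hs x s)).
    { assert (E : htt x s / w s = - (w s * hss x s + w' s * hs x s))
        by (pose proof (Hpde x s Hs); lra).
      replace (htt x s) with (w s * (htt x s / w s)) by (field; lra). rewrite E. ring. }
    rewrite Htt. match goal with |- ?l = ?r => change (@eq R l r) end. field. lra.
Qed.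

Lemma flux_nondecreasing a b : 0 < a -> a <= b -> flux a <= flux b.
Proof.
  intros Ha Hab.
  apply (Rle_of_is_derive_nonneg flux (fun s => w' s * energy' s + w s * energy'' s));
    [exact Hab | intros x Hx | intros x Hx; apply flux_derive_nonneg; lra].
  apply is_derive_Rmult with (w' x) (energy'' x);
    [apply Hwd; lra | apply is_derive_energy'; lra | ring].
Qed.

Lemma energy_nonneg s : 0 < s -> 0 <= energy s.
Proof.
  intros Hs. apply RInt_ge_0; [pose proof P_pos; lra | ex_RInt_slice | intros x _; nra].
Qed.

Lemma energy_le_of_Rabs_le s eps : 0 < s -> (forall th, 0 <= th <= P -> Rabs (h th s) <= eps) ->
  energy s <= P * (eps * eps).
Proof.
  intros Hs Heps. pose proof P_pos.
  apply Rle_trans with (RInt (fun _ => eps * eps) 0 P).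
  - apply RInt_le; [lra | ex_RInt_slice | apply ex_RInt_const |].
    intros x Hx. specialize (Heps x ltac:(lra)).
    pose proof (Rle_abs (h x s)). pose proof (Rle_abs (- h x s)). rewrite Rabs_Ropp in *. nra.
  - rewrite RInt_const. change (scal (P - 0) (eps * eps)) with ((P - 0) * (eps * eps)). lra.
Qed.

Lemma ex_RInt_inv_w a b : 0 < a -> 0 < b -> ex_RInt (fun t => / w t) a b.
Proof.
  intros Ha Hb. apply ex_RInt_continuous_R. intros z Hz. apply continuous_inv_w.
  unfold Rmin in Hz. destruct Rle_dec in Hz; lra.
Qed.

Lemma energy_growth a c : 0 < a -> (forall t, a <= t -> c <= flux t) ->
  forall b, a <= b -> energy a + c * RInt (fun t => / w t) a b <= energy b.
Proof.
  intros Ha Hc b Hab.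
  set (K := fun t => energy t - c * RInt (fun x => / w x) a t).
  enough (K a <= K b)
    by (unfold K in *; rewrite RInt_point in *; change (zero : R) with 0 in *; lra).
  apply (Rle_of_is_derive_nonneg K (fun t => energy' t - c * / w t)); [exact Hab | |].
  - intros t Ht.
    apply (is_derive_minus energy (fun t => c * RInt (fun x => / w x) a t) t
             (energy' t) (c * / w t)); [apply is_derive_energy; lra |].
    apply (is_derive_scal (fun t => RInt (fun x => / w x) a t) t c (/ w t)).
    apply (is_derive_RInt (V := R_CompleteNormedModule) (fun x => / w x)
             (fun t => RInt (fun x => / w x) a t) a t).
    + apply (filter_imp (fun y => 0 < y)); [| apply locally_pos; lra].
      intros y Hy. apply RInt_correct, ex_RInt_inv_w; lra.
    + apply continuous_inv_w. lra.
  - intros t Ht. assert (0 < w t) by (apply Hw; lra). pose proof (Hc t (proj1 Ht)).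
    unfold flux in *.
    replace (energy' t - c * / w t) with ((w t * energy' t - c) / w t) by (field; lra).
    apply Rmult_le_pos; [lra | apply Rlt_le, Rinv_0_lt_compat; lra].
Qed.

Lemma flux_nonpos s : 0 < s -> flux s <= 0.
Proof.
  intros Hs. apply Rnot_lt_le. intros Hc.
  destruct (Hdiv s (P * (M * M) / flux s) Hs) as [b [Hsb Hb]].
  assert (Hgrow := energy_growth s (flux s) Hs (fun t Ht => flux_nondecreasing s t Hs Ht) b Hsb).
  assert (energy b <= P * (M * M)) by (apply energy_le_of_Rabs_le; [lra | intros; apply Hbd; lra]).
  pose proof (energy_nonneg s Hs).
  apply (Rmult_lt_compat_l (flux s)) in Hb; [| exact Hc].
  replace (flux s * (P * (M * M) / flux s)) with (P * (M * M)) in Hb by (field; lra).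
  lra.
Qed.

Lemma energy_nonincreasing a b : 0 < a -> a <= b -> energy b <= energy a.
Proof.
  intros Ha Hab.
  enough (- energy a <= - energy b) by lra.
  apply (Rle_of_is_derive_nonneg (fun t => - energy t) (fun t => - energy' t)); [exact Hab | |].
  - intros x Hx. apply (is_derive_opp energy). apply is_derive_energy. lra.
  - intros x Hx. pose proof (flux_nonpos x ltac:(lra)). assert (0 < w x) by (apply Hw; lra).
    unfold flux in *. nra.
Qed.

Lemma energy_zero s : 0 < s -> energy s = 0.
Proof.
  intros Hs. apply Rle_antisym; [| now apply energy_nonneg].
  apply Rnot_lt_le. intros He. pose proof P_pos.
  set (eps := Rmin 1 (energy s / (2 * P))).
  assert (0 < eps /\ eps <= 1 /\ eps <= energy s / (2 * P)) as (Heps & Heps1 & Heps2).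
  { unfold eps. repeat split; [apply Rmin_glb_lt; [lra | apply Rdiv_lt_0_compat; lra] |
      apply Rmin_l | apply Rmin_r]. }
  destruct (Hlim0 eps Heps) as [d [Hd Hdd]].
  set (t := Rmin s d / 2).
  assert (0 < t /\ t < d /\ t <= s) as (Ht0 & Htd & Hts) by (unfold t, Rmin; destruct Rle_dec; lra).
  assert (energy t <= P * (eps * eps))
    by (apply energy_le_of_Rabs_le; [lra | intros th Hth; apply Rlt_le, Hdd; unfold P in Hth; lra]).
  pose proof (energy_nonincreasing t s Ht0 Hts).
  assert (P * (eps * eps) <= P * (energy s / (2 * P))) by (apply Rmult_le_compat_l; nra).
  replace (P * (energy s / (2 * P))) with (energy s / 2) in * by (field; lra).
  lra.
Qed.

Lemma liouville_half_cylinder th s : 0 < s -> 0 <= th <= 2 * PI -> h th s = 0.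
Proof.
  intros Hs Hth. apply Rsqr_0_uniq. apply Rle_antisym; [| apply Rle_0_sqr].
  apply Rnot_lt_le. intros Hpos. pose proof (energy_zero s Hs) as E.
  enough (0 < energy s) by lra.
  apply (RInt_gt_0_of_point _ 0 P th P_pos);
    [intros x _; continuous_slice | intros x _; nra | exact Hth | exact Hpos].
Qed.

End Liouville.

Section EndOfRevolution.

Variables g1 g2 : R -> R.
Hypothesis Hsm1 : smooth_on_half_line g1.
Hypothesis Hsm2 : smooth_on_half_line g2.
Hypothesis Hunit : hyp_unit_speed g1 g2.
Hypothesis Hpos1 : forall s, 0 <= s -> 0 < g1 s.
Hypothesis Hpos2 : forall s, 0 <= s -> 0 < g2 s.

Let w := w_m1 g1 g2.

Lemma w_m1_pos t : 0 <= t -> 0 < w t.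
Proof. intros Ht. apply Rdiv_lt_0_compat; auto. Qed.

Lemma ex_derive_w_m1 t : 0 <= t -> ex_derive w t.
Proof.
  intros Ht.
  assert (Hd : forall g, smooth_on_half_line g -> ex_derive g t)
    by (intros g Hg; exact (Hg 1%nat t Ht)).
  apply (ex_derive_div g1 g2); auto. now apply Rgt_not_eq, Hpos2.
Qed.

Lemma d_s_fE1 th t : d_s (fE1 g1 g2) th t = Derive g1 t * cos th.
Proof. apply Derive_scal_l. Qed.

Lemma d_s_fE2 th t : d_s (fE2 g1 g2) th t = Derive g1 t * sin th.
Proof. apply Derive_scal_l. Qed.

Lemma d_s_fE3 th t : d_s (fE3 g1 g2) th t = Derive g2 t.
Proof. reflexivity. Qed.

Lemma d_th_fE1 th t : d_th (fE1 g1 g2) th t = - (g1 t * sin th).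
Proof.
  unfold d_th, fE1. rewrite Derive_scal, (is_derive_unique cos th (- sin th));
    [ring | apply is_derive_cos].
Qed.

Lemma d_th_fE2 th t : d_th (fE2 g1 g2) th t = g1 t * cos th.
Proof.
  unfold d_th, fE2. rewrite Derive_scal, (is_derive_unique sin th (cos th));
    [ring | apply is_derive_sin].
Qed.

Lemma d_th_fE3 th t : d_th (fE3 g1 g2) th t = 0.
Proof. unfold d_th, fE3. apply Derive_const. Qed.

Lemma met_E_end th t : 0 <= t -> met_E g1 g2 th t = 1.
Proof.
  intros Ht. unfold met_E, hyp_inner. rewrite d_s_fE1, d_s_fE2, d_s_fE3. unfold fE3.
  rewrite <- (Hunit t Ht). pose proof (sin2_cos2 th) as E. unfold Rsqr in E.
  f_equal. transitivity (Derive g1 t ^ 2 * (sin th * sin th + cos th * cos th) + Derive g2 t ^ 2);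
    [ring | rewrite E; ring].
Qed.

Lemma met_F_end th t : met_F g1 g2 th t = 0.
Proof.
  unfold met_F, hyp_inner. rewrite d_s_fE1, d_s_fE2, d_s_fE3, d_th_fE1, d_th_fE2, d_th_fE3.
  unfold Rdiv. ring.
Qed.

Lemma met_G_end th t : 0 <= t -> met_G g1 g2 th t = w t ^ 2.
Proof.
  intros Ht. assert (0 < g2 t) by auto.
  unfold met_G, hyp_inner, w, w_m1. rewrite d_th_fE1, d_th_fE2, d_th_fE3. unfold fE3.
  pose proof (sin2_cos2 th) as E. unfold Rsqr in E.
  transitivity (g1 t ^ 2 * (sin th * sin th + cos th * cos th) / g2 t ^ 2); [field; lra |].
  rewrite E. field. lra.
Qed.

Lemma met_det_end th t : 0 <= t -> met_det g1 g2 th t = w t ^ 2.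
Proof.
  intros Ht. unfold met_det. rewrite met_E_end, met_F_end, met_G_end by exact Ht. ring.
Qed.

Lemma sqrt_met_det_end th t : 0 <= t -> sqrt (met_det g1 g2 th t) = w t.
Proof. intros Ht. rewrite met_det_end by exact Ht. apply sqrt_pow2, Rlt_le, w_m1_pos, Ht. Qed.

Lemma laplace_beltrami_end u th s : 0 < s -> ex_derive (fun t => d_s u th t) s ->
  laplace_beltrami g1 g2 u th s =
  (w s * d_s (d_s u) th s + Derive w s * d_s u th s + d_th (d_th u) th s / w s) / w s.
Proof.
  intros Hs Hu.
  assert (Hws : 0 < w s) by (apply w_m1_pos; lra).
  assert (Eflux_s : d_s (fun th' s' => sqrt (met_det g1 g2 th' s') *
      (met_G g1 g2 th' s' * d_s u th' s' - met_F g1 g2 th' s' * d_th u th' s') /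
      met_det g1 g2 th' s') th s = Derive (fun t => w t * d_s u th t) s).
  { apply Derive_ext_loc. apply (filter_imp (fun y => 0 < y)); [| now apply locally_pos].
    intros y Hy. assert (0 < w y) by (apply w_m1_pos; lra).
    rewrite sqrt_met_det_end, met_det_end, met_F_end, met_G_end by lra. field. lra. }
  assert (Eflux_th : d_th (fun th' s' => sqrt (met_det g1 g2 th' s') *
      (met_E g1 g2 th' s' * d_th u th' s' - met_F g1 g2 th' s' * d_s u th' s') /
      met_det g1 g2 th' s') th s = Derive (fun t => d_th u t s * / w s) th).
  { apply Derive_ext. intros y.
    rewrite sqrt_met_det_end, met_det_end, met_F_end, met_E_end by lra. field. lra. }
  unfold laplace_beltrami. cbv zeta. rewrite sqrt_met_det_end, Eflux_s, Eflux_th by lra.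
  rewrite Derive_scal_l, Derive_mult; [| apply ex_derive_w_m1; lra | exact Hu].
  change (Derive (d_s u th) s) with (d_s (d_s u) th s).
  change (Derive (fun x => d_th u x s) th) with (d_th (d_th u) th s).
  field. lra.
Qed.

Lemma harmonic_end_equation u th s : 0 < s -> C2_at u th s ->
  laplace_beltrami g1 g2 u th s = 0 ->
  w s * d_s (d_s u) th s + Derive w s * d_s u th s + d_th (d_th u) th s / w s = 0.
Proof.
  intros Hs [_ [_ [Hu _]]] Hlap. rewrite laplace_beltrami_end in Hlap by assumption.
  assert (0 < w s) by (apply w_m1_pos; lra).
  apply (Rmult_eq_reg_r (/ w s)); [now rewrite Rmult_0_l | apply Rinv_neq_0_compat; lra].
Qed.

End EndOfRevolution.

Lemma has_C2_partials_of_C2_at u : (forall th s, 0 < s -> C2_at u th s) ->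
  has_C2_partials u (d_s u) (d_s (d_s u)) (d_th u) (d_th (d_th u)).
Proof.
  intros Hu th s Hs.
  destruct (Hu th s Hs) as (Hs1 & Hth1 & Hss & _ & _ & Htt & Hc & Hcs & Hcth & Hcss & _ & _ & Hctt).
  repeat match goal with |- _ /\ _ => split end; try assumption; now apply Derive_correct.
Qed.

Lemma has_C2_partials_minus u us uss uth utt v vs vss vth vtt :
  has_C2_partials u us uss uth utt -> has_C2_partials v vs vss vth vtt ->
  has_C2_partials (fun th s => u th s - v th s) (fun th s => us th s - vs th s)
    (fun th s => uss th s - vss th s) (fun th s => uth th s - vth th s)
    (fun th s => utt th s - vtt th s).
Proof.
  intros Hu Hv th s Hs.
  destruct (Hu th s Hs) as (Hu1 & Hu2 & Hu3 & Hu4 & Hu5 & Hu6 & Hu7 & Hu8 & Hu9).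
  destruct (Hv th s Hs) as (Hv1 & Hv2 & Hv3 & Hv4 & Hv5 & Hv6 & Hv7 & Hv8 & Hv9).
  repeat match goal with |- _ /\ _ => split end;
    match goal with
    | |- is_derive (fun t => @?f t - @?g t) _ _ => now apply (is_derive_minus f g)
    | |- continuity_2d_pt _ _ _ => now apply continuity_2d_pt_minus
    end.
Qed.

(* compactness of [[a, b]] upgrades the pointwise continuity at the boundary to uniformity in th *)
Lemma boundary_agreement_uniform (u v : R -> R -> R) a b :
  continuous_on_end u -> continuous_on_end v -> (forall th, u th 0 = v th 0) ->
  forall eps, 0 < eps -> exists d, 0 < d /\
    forall th s, a <= th <= b -> 0 < s < d -> Rabs (u th s - v th s) < eps.
Proof.
  intros Hu Hv H0 eps He.
  assert (Hloc : forall th, exists dl : posreal, forall th' s, 0 <= s ->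
            Rabs (th' - th) < dl -> Rabs s < dl -> Rabs (u th' s - v th' s) < eps).
  { intros th. destruct (Hu th 0 (Rle_refl 0) (eps / 2) ltac:(lra)) as [d1 [Hd1 H1]].
    destruct (Hv th 0 (Rle_refl 0) (eps / 2) ltac:(lra)) as [d2 [Hd2 H2]].
    exists (mkposreal (Rmin d1 d2) (Rmin_glb_lt _ _ _ Hd1 Hd2)). simpl.
    intros th' s Hs Ht Hs'. pose proof (Rmin_l d1 d2). pose proof (Rmin_r d1 d2).
    specialize (H1 th' s Hs ltac:(lra) ltac:(rewrite Rminus_0_r; lra)).
    specialize (H2 th' s Hs ltac:(lra) ltac:(rewrite Rminus_0_r; lra)).
    rewrite H0 in H1. apply Rabs_def2 in H1. apply Rabs_def2 in H2. apply Rabs_def1; lra. }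
  destruct (functional_choice _ Hloc) as [delta Hdelta].
  destruct (compactness_value_1d a b delta) as [d Hd].
  exists d. split; [apply cond_pos |]. intros th s Hth Hs.
  apply Rnot_le_lt. intros Hn. apply (Hd th Hth). intros [t [_ [Ht1 Ht2]]].
  assert (Rabs (u th s - v th s) < eps); [| lra].
  apply (Hdelta t th s); [lra | exact Ht1 | rewrite Rabs_pos_eq; lra].
Qed.

Section Parabolicity.

Variables g1 g2 : R -> R.
Hypothesis Hsm1 : smooth_on_half_line g1.
Hypothesis Hsm2 : smooth_on_half_line g2.
Hypothesis Hunit : hyp_unit_speed g1 g2.
Hypothesis Hpos1 : forall s, 0 <= s -> 0 < g1 s.
Hypothesis Hpos2 : forall s, 0 <= s -> 0 < g2 s.
Hypothesis Hdiv :
  forall a K, 0 < a -> exists b, a <= b /\ K < RInt (fun t => / w_m1 g1 g2 t) a b.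

Lemma bounded_harmonic_end_agree u v :
  bounded_harmonic_on_end g1 g2 u -> bounded_harmonic_on_end g1 g2 v ->
  (forall th, u th 0 = v th 0) ->
  forall th s, 0 < s -> 0 <= th <= 2 * PI -> u th s = v th s.
Proof.
  intros (Hpu & [Mu HMu] & Hcu & Hhu) (Hpv & [Mv HMv] & Hcv & Hhv) Hbdry th s Hs Hth.
  apply Rminus_diag_uniq.
  apply (liouville_half_cylinder (w_m1 g1 g2) (Derive (w_m1 g1 g2)) (fun th s => u th s - v th s)
    (fun th s => d_s u th s - d_s v th s) (fun th s => d_s (d_s u) th s - d_s (d_s v) th s)
    (fun th s => d_th u th s - d_th v th s) (fun th s => d_th (d_th u) th s - d_th (d_th v) th s)
    (Mu + Mv)); try assumption.
  - intros t Ht. apply w_m1_pos; auto; lra.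
  - intros t Ht. apply Derive_correct, ex_derive_w_m1; auto; lra.
  - apply has_C2_partials_minus; apply has_C2_partials_of_C2_at;
      intros; [apply Hhu | apply Hhv]; assumption.
  - intros th' s' Hs'.
    destruct (Hhu th' s' Hs') as [HCu Hlu]. destruct (Hhv th' s' Hs') as [HCv Hlv].
    apply harmonic_end_equation in Hlu, Hlv; auto.
    cbv beta. unfold Rdiv in *. rewrite !Rmult_minus_distr_l, Rmult_minus_distr_r. lra.
  - intros s' Hs'. split.
    + rewrite <- (Hpu 0 s'), <- (Hpv 0 s'), Rplus_0_l. reflexivity.
    + destruct (Hhu (2 * PI) s' Hs') as [(_ & Hdu & _) _].
      destruct (Hhv (2 * PI) s' Hs') as [(_ & Hdv & _) _].
      unfold d_th. rewrite !(Derive_periodic _ (2 * PI)); auto.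
  - intros th' s' Hs'. unfold Rminus. eapply Rle_trans; [apply Rabs_triang |].
    rewrite Rabs_Ropp. pose proof (HMu th' s'). pose proof (HMv th' s'). lra.
  - apply boundary_agreement_uniform; assumption.
Qed.

Lemma parabolic_end_of_RInt_inv_unbounded : parabolic_end g1 g2.
Proof.
  intros u v Hu Hv Hbdry th s Hs.
  destruct (Req_dec s 0) as [-> | Hs_ne]; [apply Hbdry |].
  destruct (periodic_reduce (fun th => u th s - v th s) (2 * PI)) with (x := th) as [y [Hy E]].
  - intros x. now rewrite (proj1 Hu), (proj1 Hv).
  - pose proof PI_RGT_0. lra.
  - pose proof (bounded_harmonic_end_agree u v Hu Hv Hbdry y s ltac:(lra) Hy). lra.
Qed.

End Parabolicity.

Lemma RInt_w_m1_le_of_x_g g1 g2 C s : 0 < s -> x_g g1 g2 s <= C * s ->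
  RInt (w_m1 g1 g2) 0 s <= C * s ^ 2.
Proof.
  intros Hs H. apply Rmult_le_reg_l with (/ s); [now apply Rinv_0_lt_compat |].
  replace (/ s * (C * s ^ 2)) with (C * s) by (field; lra). exact H.
Qed.

Theorem theorem8p1 (g1 g2 : R -> R)
  (Hsm1 : smooth_on_half_line g1) (Hsm2 : smooth_on_half_line g2)
  (Hunit : hyp_unit_speed g1 g2)
  (Hpos1 : forall s, 0 <= s -> 0 < g1 s)
  (Hpos2 : forall s, 0 <= s -> 0 < g2 s)
  (C s0 : R) (HC : 0 < C) (Hs0 : 0 < s0)
  (Hgrowth : forall s, s0 <= s -> x_g g1 g2 s <= C * s) :
  parabolic_end g1 g2.
Proof.
  apply parabolic_end_of_RInt_inv_unbounded; try assumption.
  intros a K Ha.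
  apply (RInt_inv_weight_unbounded (w_m1 g1 g2) C s0); [assumption | assumption | | | | lra].
  - now apply w_m1_pos.
  - intros t Ht. apply (ex_derive_continuous (K := R_AbsRing) (V := R_NormedModule)).
    now apply ex_derive_w_m1.
  - intros s Hs. apply RInt_w_m1_le_of_x_g; auto; lra.
Qed.
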